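(* There is a 2-functor $\mathrm{Imp}\colon \mathrm{W2G}\to\mathrm{C2G}$ which sends each weak 2-group $C$ to a coherent 2-group $\mathrm{Imp}(C)$ having the same underlying weak monoidal category as $C$ (equipped with a choice of adjoint equivalence for each object), and which acts as the identity on morphisms and 2-morphisms.
   Context: A weak 2-group is a weak monoidal category in which all morphisms are invertible and every object $x$ has a weak inverse $y$ ($x\otimes y\cong 1\cong y\otimes x$). A coherent 2-group is a weak monoidal category in which all morphisms are invertible and each object $x$ is equipped with an adjoint equivalence $(x,\bar x,i_x,e_x)$: isomorphisms $i_x\colon 1\to x\otimes\bar x$, $e_x\colon\bar x\otimes x\to 1$ satisfying the two zig-zag identities ($r_x^{-1}\ell_x=(1\otimes e_x)a_{x,\bar x,x}(i_x\otimes 1)$ and $\ell_{\bar x}^{-1}r_{\bar x}=(e_x\otimes 1)a^{-1}_{\bar x,x,\bar x}(1\otimes i_x)$). $\mathrm{W2G}$ (resp. $\mathrm{C2G}$) is the strict 2-category whose objects are weak (resp. coherent) 2-groups, whose morphisms are weak monoidal functors (for coherent 2-groups no compatibility with the chosen adjoint equivalences is required), and whose 2-morphisms are monoidal natural transformations. *)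

(* Composition is written applicatively:
   [comp g f] is "g after f" (the paper's "g f"). *)

Record MonCat := {
  ob : Type;
  hom : ob -> ob -> Type;
  idm : forall x, hom x x;
  comp : forall x y z, hom y z -> hom x y -> hom x z;
  comp_id_l : forall x y (f : hom x y), comp _ _ _ (idm y) f = f;
  comp_id_r : forall x y (f : hom x y), comp _ _ _ f (idm x) = f;
  comp_assoc : forall w x y z (h : hom y z) (g : hom x y) (f : hom w x),
      comp _ _ _ h (comp _ _ _ g f) = comp _ _ _ (comp _ _ _ h g) f;
  tens : ob -> ob -> ob;
  tensm : forall x x' y y', hom x x' -> hom y y' -> hom (tens x y) (tens x' y');
  tens_id : forall x y, tensm _ _ _ _ (idm x) (idm y) = idm (tens x y);
  tens_comp : forall x x' x'' y y' y'' (f : hom x x') (f' : hom x' x'')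
      (g : hom y y') (g' : hom y' y''),
      tensm _ _ _ _ (comp _ _ _ f' f) (comp _ _ _ g' g)
      = comp _ _ _ (tensm _ _ _ _ f' g') (tensm _ _ _ _ f g);
  unit : ob;
  assoc : forall x y z, hom (tens (tens x y) z) (tens x (tens y z));
  lunit : forall x, hom (tens unit x) x;
  runit : forall x, hom (tens x unit) x;
  assoc_iso : forall x y z, exists g, comp _ _ _ g (assoc x y z) = idm _
                                 /\ comp _ _ _ (assoc x y z) g = idm _;
  lunit_iso : forall x, exists g, comp _ _ _ g (lunit x) = idm _
                             /\ comp _ _ _ (lunit x) g = idm _;
  runit_iso : forall x, exists g, comp _ _ _ g (runit x) = idm _
                             /\ comp _ _ _ (runit x) g = idm _;
  assoc_nat : forall x x' y y' z z' (f : hom x x') (g : hom y y') (h : hom z z'),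
      comp _ _ _ (assoc x' y' z') (tensm _ _ _ _ (tensm _ _ _ _ f g) h)
      = comp _ _ _ (tensm _ _ _ _ f (tensm _ _ _ _ g h)) (assoc x y z);
  lunit_nat : forall x x' (f : hom x x'),
      comp _ _ _ (lunit x') (tensm _ _ _ _ (idm unit) f) = comp _ _ _ f (lunit x);
  runit_nat : forall x x' (f : hom x x'),
      comp _ _ _ (runit x') (tensm _ _ _ _ f (idm unit)) = comp _ _ _ f (runit x);
  pentagon : forall w x y z,
      comp _ _ _ (assoc w x (tens y z)) (assoc (tens w x) y z)
      = comp _ _ _ (tensm _ _ _ _ (idm w) (assoc x y z))
          (comp _ _ _ (assoc w (tens x y) z) (tensm _ _ _ _ (assoc w x y) (idm z)));
  triangle : forall x y,
      comp _ _ _ (tensm _ _ _ _ (idm x) (lunit y)) (assoc x unit y)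
      = tensm _ _ _ _ (runit x) (idm y)
}.

Arguments idm {_} x.
Arguments comp {_ x y z} g f.
Arguments tens {_} x y.
Arguments tensm {_ x x' y y'} f g.
Arguments unit {_}.
Arguments assoc {_} x y z.
Arguments lunit {_} x.
Arguments runit {_} x.

Definition is_inverse (M : MonCat) (x y : ob M) (f : hom M x y) (g : hom M y x) : Prop :=
  comp g f = idm x /\ comp f g = idm y.

Definition is_iso (M : MonCat) (x y : ob M) (f : hom M x y) : Prop :=
  exists g, is_inverse M x y f g.

Definition isomorphic (M : MonCat) (x y : ob M) : Prop :=
  exists f : hom M x y, is_iso M x y f.

Definition all_invertible (M : MonCat) : Prop :=
  forall x y (f : hom M x y), is_iso M x y f.

Record W2G := {
  w2g_mon : MonCat;
  w2g_inv : all_invertible w2g_mon;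
  w2g_weak_inverse : forall x : ob w2g_mon, exists y : ob w2g_mon,
      isomorphic w2g_mon (tens x y) unit /\ isomorphic w2g_mon (tens y x) unit
}.

(** * Adjoint equivalences (x, xbar, i_x, e_x)
    Zig-zag identities, literally as in the paper, where r^{-1}, l^{-1}, a^{-1}
    denote the (unique) inverses:
      r_x^{-1} l_x = (1 (x) e_x) a_{x,xbar,x} (i_x (x) 1)
      l_xbar^{-1} r_xbar = (e_x (x) 1) a^{-1}_{xbar,x,xbar} (1 (x) i_x). *)
Definition adjoint_equivalence (M : MonCat) (x xbar : ob M)
    (i : hom M unit (tens x xbar)) (e : hom M (tens xbar x) unit) : Prop :=
  is_iso M _ _ i /\ is_iso M _ _ e /\
  (forall rinv : hom M x (tens x unit), is_inverse M _ _ (runit x) rinv ->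
     comp rinv (lunit x)
     = comp (tensm (idm x) e) (comp (assoc x xbar x) (tensm i (idm x)))) /\
  (forall (linv : hom M xbar (tens unit xbar))
          (ainv : hom M (tens xbar (tens x xbar)) (tens (tens xbar x) xbar)),
     is_inverse M _ _ (lunit xbar) linv ->
     is_inverse M _ _ (assoc xbar x xbar) ainv ->
     comp linv (runit xbar)
     = comp (tensm e (idm xbar)) (comp ainv (tensm (idm xbar) i))).

Record C2G := {
  c2g_mon : MonCat;
  c2g_inv : all_invertible c2g_mon;
  c2g_bar : ob c2g_mon -> ob c2g_mon;
  c2g_i : forall x, hom c2g_mon unit (tens x (c2g_bar x));
  c2g_e : forall x, hom c2g_mon (tens (c2g_bar x) x) unit;
  c2g_adj : forall x, adjoint_equivalence c2g_mon x (c2g_bar x) (c2g_i x) (c2g_e x)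
}.

Record MonFunctor (M N : MonCat) := {
  fob : ob M -> ob N;
  fmor : forall x y, hom M x y -> hom N (fob x) (fob y);
  fmor_id : forall x, fmor _ _ (idm x) = idm (fob x);
  fmor_comp : forall x y z (g : hom M y z) (f : hom M x y),
      fmor _ _ (comp g f) = comp (fmor _ _ g) (fmor _ _ f);
  fmu : forall x y, hom N (tens (fob x) (fob y)) (fob (tens x y));
  feta : hom N unit (fob unit);
  fmu_iso : forall x y, is_iso N _ _ (fmu x y);
  feta_iso : is_iso N _ _ feta;
  fmu_nat : forall x x' y y' (f : hom M x x') (g : hom M y y'),
      comp (fmu x' y') (tensm (fmor _ _ f) (fmor _ _ g))
      = comp (fmor _ _ (tensm f g)) (fmu x y);
  fassoc : forall x y z,
      comp (fmor _ _ (assoc x y z)) (comp (fmu (tens x y) z) (tensm (fmu x y) (idm (fob z))))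
      = comp (fmu x (tens y z))
          (comp (tensm (idm (fob x)) (fmu y z)) (assoc (fob x) (fob y) (fob z)));
  flunit : forall x,
      comp (fmor _ _ (lunit x)) (comp (fmu unit x) (tensm feta (idm (fob x))))
      = lunit (fob x);
  frunit : forall x,
      comp (fmor _ _ (runit x)) (comp (fmu x unit) (tensm (idm (fob x)) feta))
      = runit (fob x)
}.

Arguments fob {M N} m x.
Arguments fmor {M N} m {x y} _.
Arguments fmu {M N} m x y.
Arguments feta {M N} m.

Record MonNat (M N : MonCat) (F G : MonFunctor M N) := {
  ncomp : forall x, hom N (fob F x) (fob G x);
  nnat : forall x y (f : hom M x y),
      comp (ncomp y) (fmor F f) = comp (fmor G f) (ncomp x);
  nmu : forall x y,
      comp (ncomp (tens x y)) (fmu F x y) = comp (fmu G x y) (tensm (ncomp x) (ncomp y));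
  neta : comp (ncomp unit) (feta F) = feta G
}.

(** Note that both depend only
    on the underlying weak monoidal categories (no compatibility with the chosen
    adjoint equivalences is required for C2G). *)
Definition W2G_mor (C D : W2G) := MonFunctor (w2g_mon C) (w2g_mon D).
Arguments ncomp {M N F G} m x.

Definition W2G_2mor (C D : W2G) (F G : W2G_mor C D) := @MonNat _ _ F G.
Definition C2G_mor (C D : C2G) := MonFunctor (c2g_mon C) (c2g_mon D).
Definition C2G_2mor (C D : C2G) (F G : C2G_mor C D) := @MonNat _ _ F G.

(* Let y be a weak inverse of x, with isomorphisms i : 1 -> x (x) y and
   e0 : y (x) x -> 1.  Replacing e0 by e0 (1 (x) h) for an automorphism h of x
   multiplies the first zig-zag composite (1 (x) e) a (i (x) 1) on the right by
   1 (x) h, and every automorphism of 1 (x) x has this form; so a suitable h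
   makes the first zig-zag identity hold.  For invertible i and e the first
   zig-zag identity implies the second: tensoring on the right with x is
   faithful (x has a right inverse), and after tensoring both sides reduce to
   the same composite by Kelly's coherence identities and the pentagon. *)

From Stdlib Require Import ClassicalEpsilon.

Local Notation "g ∘ f" := (comp g f) (at level 60, right associativity).
Local Notation "f ⊗ g" := (tensm f g) (at level 30).

Section Monoidal.
Variable M : MonCat.

Lemma is_inverse_sym (x y : ob M) (f : hom M x y) (g : hom M y x) :
  is_inverse M x y f g -> is_inverse M y x g f.
Proof. intros [Hgf Hfg]. split; assumption. Qed.

Lemma is_iso_comp (x y z : ob M) (g : hom M y z) (f : hom M x y) :
  is_iso M _ _ g -> is_iso M _ _ f -> is_iso M _ _ (g ∘ f).
Proof.
  intros [g' [Hg1 Hg2]] [f' [Hf1 Hf2]]. exists (f' ∘ g'). split.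
  - rewrite <- comp_assoc, (comp_assoc _ _ _ _ _ g'), Hg1, comp_id_l, Hf1. reflexivity.
  - rewrite <- comp_assoc, (comp_assoc _ _ _ _ _ f), Hf2, comp_id_l, Hg2. reflexivity.
Qed.

Lemma is_iso_tensm (x x' y y' : ob M) (f : hom M x x') (g : hom M y y') :
  is_iso M _ _ f -> is_iso M _ _ g -> is_iso M _ _ (f ⊗ g).
Proof.
  intros [f' [Hf1 Hf2]] [g' [Hg1 Hg2]]. exists (f' ⊗ g').
  split; rewrite <- tens_comp; [rewrite Hf1, Hg1 | rewrite Hf2, Hg2]; apply tens_id.
Qed.

Lemma is_iso_idm (x : ob M) : is_iso M x x (idm x).
Proof. exists (idm x). split; apply comp_id_l. Qed.

Lemma iso_mono {x y z : ob M} (f : hom M y z) {g1 g2 : hom M x y} :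
  is_iso M _ _ f -> f ∘ g1 = f ∘ g2 -> g1 = g2.
Proof.
  intros [f' [Hf _]] E.
  rewrite <- (comp_id_l _ _ _ g1), <- (comp_id_l _ _ _ g2), <- Hf, <- !comp_assoc, E.
  reflexivity.
Qed.

Lemma iso_epi {x y z : ob M} (f : hom M x y) {g1 g2 : hom M y z} :
  is_iso M _ _ f -> g1 ∘ f = g2 ∘ f -> g1 = g2.
Proof.
  intros [f' [_ Hf]] E.
  rewrite <- (comp_id_r _ _ _ g1), <- (comp_id_r _ _ _ g2), <- Hf, !comp_assoc, E.
  reflexivity.
Qed.

Lemma tensm_idl_comp (w x y z : ob M) (g : hom M y z) (f : hom M x y) :
  idm w ⊗ (g ∘ f) = (idm w ⊗ g) ∘ (idm w ⊗ f).
Proof. rewrite <- tens_comp, comp_id_l. reflexivity. Qed.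

Lemma tensm_idr_comp (w x y z : ob M) (g : hom M y z) (f : hom M x y) :
  (g ∘ f) ⊗ idm w = (g ⊗ idm w) ∘ (f ⊗ idm w).
Proof. rewrite <- tens_comp, comp_id_l. reflexivity. Qed.

Lemma tensm_decomp_l {x x' y y' : ob M} (f : hom M x x') (g : hom M y y') :
  f ⊗ g = (f ⊗ idm y') ∘ (idm x ⊗ g).
Proof. rewrite <- tens_comp, comp_id_l, comp_id_r. reflexivity. Qed.

Lemma tensm_decomp_r {x x' y y' : ob M} (f : hom M x x') (g : hom M y y') :
  f ⊗ g = (idm x' ⊗ g) ∘ (f ⊗ idm y).
Proof. rewrite <- tens_comp, comp_id_l, comp_id_r. reflexivity. Qed.

Lemma assoc_nat1 (x x' y z : ob M) (f : hom M x x') :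
  assoc x' y z ∘ ((f ⊗ idm y) ⊗ idm z) = (f ⊗ idm (tens y z)) ∘ assoc x y z.
Proof. rewrite <- tens_id. apply assoc_nat. Qed.

Lemma assoc_nat2 (x y y' z : ob M) (g : hom M y y') :
  assoc x y' z ∘ ((idm x ⊗ g) ⊗ idm z) = (idm x ⊗ (g ⊗ idm z)) ∘ assoc x y z.
Proof. apply assoc_nat. Qed.

Lemma assoc_nat3 (x y z z' : ob M) (h : hom M z z') :
  assoc x y z' ∘ (idm (tens x y) ⊗ h) = (idm x ⊗ (idm y ⊗ h)) ∘ assoc x y z.
Proof. rewrite <- tens_id. apply assoc_nat. Qed.

Lemma tensm_unitl_inj (x y : ob M) (f g : hom M x y) :
  idm unit ⊗ f = idm unit ⊗ g -> f = g.
Proof.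
  intro E. apply (iso_epi (lunit x)); [exact (lunit_iso M x) |].
  rewrite <- !lunit_nat, E. reflexivity.
Qed.

Lemma tensm_unitr_inj (x y : ob M) (f g : hom M x y) :
  f ⊗ idm unit = g ⊗ idm unit -> f = g.
Proof.
  intro E. apply (iso_epi (runit x)); [exact (runit_iso M x) |].
  rewrite <- !runit_nat, E. reflexivity.
Qed.

Lemma lunit_tens (x y : ob M) :
  lunit (tens x y) ∘ assoc unit x y = lunit x ⊗ idm y.
Proof.
  apply tensm_unitl_inj.
  apply (iso_epi (assoc unit (tens unit x) y ∘ (assoc unit unit x ⊗ idm y))).
  { apply is_iso_comp; [exact (assoc_iso M _ _ _) |].
    apply is_iso_tensm; [exact (assoc_iso M _ _ _) | apply is_iso_idm]. }
  rewrite tensm_idl_comp, <- comp_assoc, <- pentagon, comp_assoc, triangle,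
    <- assoc_nat1, <- triangle, tensm_idr_comp, comp_assoc, assoc_nat2, <- !comp_assoc.
  reflexivity.
Qed.

Lemma runit_tens (x y : ob M) :
  (idm x ⊗ runit y) ∘ assoc x y unit = runit (tens x y).
Proof.
  apply tensm_unitr_inj.
  apply (iso_mono (assoc x y unit)); [exact (assoc_iso M _ _ _) |].
  rewrite tensm_idr_comp, comp_assoc, assoc_nat2, <- (triangle M y unit), tensm_idl_comp,
    <- !comp_assoc, <- pentagon, comp_assoc, <- assoc_nat3, <- comp_assoc, triangle.
  reflexivity.
Qed.

Lemma lunit_unit : lunit (@unit M) = runit unit.
Proof.
  apply tensm_unitr_inj.
  assert (E : idm unit ⊗ lunit unit = lunit (tens (@unit M) unit)).
  { apply (iso_mono (lunit unit)); [exact (lunit_iso M _) |]. apply lunit_nat. }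
  rewrite <- lunit_tens, <- E, triangle. reflexivity.
Qed.

Lemma tensm_unitl_surj (x y : ob M) (k : hom M (tens unit x) (tens unit y)) :
  exists h, idm unit ⊗ h = k.
Proof.
  destruct (lunit_iso M x) as [linv [Hl _]].
  exists (lunit y ∘ k ∘ linv).
  apply (iso_mono (lunit y)); [exact (lunit_iso M y) |].
  rewrite lunit_nat, <- !comp_assoc, Hl, comp_id_r. reflexivity.
Qed.

Lemma is_iso_of_tensm_unitl (x y : ob M) (h : hom M x y) :
  is_iso M _ _ (idm unit ⊗ h) -> is_iso M _ _ h.
Proof.
  intro Hh. destruct (lunit_iso M x) as [linv Hl].
  replace h with (lunit y ∘ (idm unit ⊗ h) ∘ linv).
  - apply is_iso_comp; [exact (lunit_iso M y) |].
    apply is_iso_comp; [exact Hh |]. exists (lunit x). apply is_inverse_sym, Hl.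
  - rewrite comp_assoc, lunit_nat, <- comp_assoc, (proj2 Hl), comp_id_r. reflexivity.
Qed.

Lemma lunit_tensm_runit (z : ob M) (e : hom M z unit) :
  is_iso M _ _ e -> lunit z ∘ (e ⊗ idm z) = runit z ∘ (idm z ⊗ e).
Proof.
  intro He. apply (iso_mono e He).
  rewrite !comp_assoc, <- lunit_nat, <- runit_nat, <- !comp_assoc,
    <- !tensm_decomp_l, <- tensm_decomp_r, lunit_unit.
  reflexivity.
Qed.

Section AdjointEquivalence.
Variables (x y : ob M) (i : hom M unit (tens x y)).
Hypothesis i_iso : is_iso M _ _ i.

Definition zigzag (e : hom M (tens y x) unit) : hom M (tens unit x) (tens x unit) :=
  (idm x ⊗ e) ∘ assoc x y x ∘ (i ⊗ idm x).

Lemma tensm_idr_inj (a b : ob M) (f g : hom M a b) :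
  f ⊗ idm x = g ⊗ idm x -> f = g.
Proof.
  intro E.
  assert (Exy : f ⊗ idm (tens x y) = g ⊗ idm (tens x y)).
  { apply (iso_epi (assoc a x y)); [exact (assoc_iso M _ _ _) |].
    rewrite <- !assoc_nat1, E. reflexivity. }
  apply tensm_unitr_inj, (iso_mono (idm b ⊗ i)).
  { apply is_iso_tensm; [apply is_iso_idm | exact i_iso]. }
  rewrite <- !tensm_decomp_r, (tensm_decomp_l f i), (tensm_decomp_l g i), Exy.
  reflexivity.
Qed.

Lemma zigzag_twist (e : hom M (tens y x) unit) (h : hom M x x) :
  zigzag (e ∘ (idm y ⊗ h)) = zigzag e ∘ (idm unit ⊗ h).
Proof.
  unfold zigzag.
  rewrite tensm_idl_comp, <- comp_assoc, (comp_assoc _ _ _ _ _ (idm x ⊗ (idm y ⊗ h))),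
    <- assoc_nat3, <- comp_assoc, <- tensm_decomp_r, (tensm_decomp_l i h), !comp_assoc.
  reflexivity.
Qed.

Lemma is_iso_zigzag (e : hom M (tens y x) unit) :
  is_iso M _ _ e -> is_iso M _ _ (zigzag e).
Proof.
  intro He. unfold zigzag.
  apply is_iso_comp; [apply is_iso_tensm; [apply is_iso_idm | exact He] |].
  apply is_iso_comp; [exact (assoc_iso M x y x) |].
  apply is_iso_tensm; [exact i_iso | apply is_iso_idm].
Qed.

Lemma zigzag_solvable (e0 : hom M (tens y x) unit) :
  is_iso M _ _ e0 -> exists e, is_iso M _ _ e /\ runit x ∘ zigzag e = lunit x.
Proof.
  intro He0.
  destruct (is_iso_zigzag e0 He0) as [zinv Hz], (runit_iso M x) as [rinv Hr].
  set (k := zinv ∘ rinv ∘ lunit x).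
  assert (Hk : is_iso M _ _ k).
  { apply is_iso_comp; [exists (zigzag e0); apply is_inverse_sym, Hz |].
    apply is_iso_comp; [exists (runit x); apply is_inverse_sym, Hr |].
    exact (lunit_iso M x). }
  destruct (tensm_unitl_surj _ _ k) as [h Hh].
  exists (e0 ∘ (idm y ⊗ h)). split.
  - apply is_iso_comp; [exact He0 |].
    apply is_iso_tensm; [apply is_iso_idm |].
    apply is_iso_of_tensm_unitl. rewrite Hh. exact Hk.
  - rewrite zigzag_twist, Hh. unfold k.
    rewrite (comp_assoc _ _ _ _ _ (zigzag e0)), (proj2 Hz), comp_id_l,
      comp_assoc, (proj2 Hr), comp_id_l.
    reflexivity.
Qed.

Lemma second_zigzag_of_first (e : hom M (tens y x) unit)
    (ainv : hom M (tens y (tens x y)) (tens (tens y x) y)) :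
  is_iso M _ _ e -> is_inverse M _ _ (assoc y x y) ainv ->
  runit x ∘ zigzag e = lunit x ->
  lunit y ∘ (e ⊗ idm y) ∘ ainv ∘ (idm y ⊗ i) = runit y.
Proof.
  intros He Ha Hzig. apply tensm_idr_inj.
  assert (pentagon_ainv : (idm y ⊗ assoc x y x) ∘ assoc y (tens x y) x
                          = assoc y x (tens y x) ∘ assoc (tens y x) y x ∘ (ainv ⊗ idm x)).
  { apply (iso_epi (assoc y x y ⊗ idm x)).
    { apply is_iso_tensm; [exact (assoc_iso M _ _ _) | apply is_iso_idm]. }
    rewrite <- comp_assoc, <- pentagon, <- !comp_assoc, <- tensm_idr_comp, (proj1 Ha),
      tens_id, comp_id_r.
    reflexivity. }
  transitivity (runit (tens y x) ∘ (idm (tens y x) ⊗ e) ∘ assoc (tens y x) y x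
                ∘ (ainv ⊗ idm x) ∘ ((idm y ⊗ i) ⊗ idm x)).
  - rewrite !tensm_idr_comp, <- lunit_tens, <- comp_assoc,
      (comp_assoc _ _ _ _ _ (assoc unit y x)), assoc_nat1, <- comp_assoc, comp_assoc,
      (lunit_tensm_runit _ e He), <- !comp_assoc.
    reflexivity.
  - unfold zigzag in Hzig.
    rewrite <- triangle, <- Hzig, !tensm_idl_comp, <- !comp_assoc, <- assoc_nat2,
      (comp_assoc _ _ _ _ _ (idm y ⊗ assoc x y x)), pentagon_ainv, <- !comp_assoc,
      (comp_assoc _ _ _ _ _ (idm y ⊗ (idm x ⊗ e))), <- assoc_nat3, <- !comp_assoc,
      (comp_assoc _ _ _ _ _ (idm y ⊗ runit x)), runit_tens.
    reflexivity.
Qed.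

Lemma adjoint_equivalence_of_isos (e0 : hom M (tens y x) unit) :
  is_iso M _ _ e0 -> exists e, adjoint_equivalence M x y i e.
Proof.
  intro He0. destruct (zigzag_solvable e0 He0) as [e [He Hzig]].
  exists e. split; [exact i_iso | split; [exact He | split]].
  - intros rinv [Hr _]. rewrite <- Hzig, comp_assoc, Hr, comp_id_l. reflexivity.
  - intros linv ainv [Hl _] Ha.
    rewrite <- (second_zigzag_of_first e ainv He Ha Hzig), comp_assoc, Hl, comp_id_l.
    reflexivity.
Qed.

End AdjointEquivalence.

End Monoidal.

Record adjoint_inverse (M : MonCat) (x : ob M) := {
  adj_bar : ob M;
  adj_i : hom M unit (tens x adj_bar);
  adj_e : hom M (tens adj_bar x) unit;
  adj_spec : adjoint_equivalence M x adj_bar adj_i adj_e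
}.

Arguments adj_bar {M x}.
Arguments adj_i {M x}.
Arguments adj_e {M x}.
Arguments adj_spec {M x}.

Lemma adjoint_inverse_of_weak_inverse (M : MonCat) (x y : ob M) :
  isomorphic M (tens x y) unit -> isomorphic M (tens y x) unit ->
  inhabited (adjoint_inverse M x).
Proof.
  intros [f [finv Hf]] [e0 He0].
  assert (Hi : is_iso M _ _ finv) by (exists f; apply is_inverse_sym, Hf).
  destruct (adjoint_equivalence_of_isos M x y finv Hi e0 He0) as [e He].
  exact (inhabits (Build_adjoint_inverse M x y finv e He)).
Qed.

Lemma w2g_adjoint_inverse (C : W2G) (x : ob (w2g_mon C)) :
  inhabited (adjoint_inverse (w2g_mon C) x).
Proof.
  destruct (w2g_weak_inverse C x) as [y [Hxy Hyx]].
  exact (adjoint_inverse_of_weak_inverse _ x y Hxy Hyx).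
Qed.

Definition Imp (C : W2G) : C2G :=
  let adj x := epsilon (w2g_adjoint_inverse C x) (fun _ => True) in
  {| c2g_mon := w2g_mon C;
     c2g_inv := w2g_inv C;
     c2g_bar x := adj_bar (adj x);
     c2g_i x := adj_i (adj x);
     c2g_e x := adj_e (adj x);
     c2g_adj x := adj_spec (adj x) |}.

Theorem corollary5p3 :
  exists Imp : W2G -> C2G, forall C : W2G, c2g_mon (Imp C) = w2g_mon C.
Proof.
  exists Imp. intro C. reflexivity.
Qed.
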